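(* Let $(P,r)$ and $(\overline P,r)$ be MDPs on the same finite state and action spaces with rewards in $[0,1]$. Suppose there exist $m,\beta>1$, $\gamma\in(0,1)$ and a policy $\pi$ such that $$\|V^{\pi^\star_\gamma}_\gamma-\overline V^{\pi^\star_\gamma}_\gamma\|_\infty\le\frac{\beta}{1-\gamma}\sqrt{\frac{\|V^{\pi^\star_\gamma}_\gamma\|_{\mathrm{sp}}+1}{m}},\qquad \overline V^\pi_\gamma\ge\overline V^\star_\gamma-\frac1m\mathbf 1,\qquad \|\overline V^\pi_\gamma-V^\pi_\gamma\|_\infty\le\frac{\beta}{1-\gamma}\sqrt{\frac{\|\overline V^\pi_\gamma\|_{\mathrm{sp}}+1}{m}}.$$ Then $$\|\overline V^\star_\gamma-V^\star_\gamma\|_\infty\le\frac{2\beta^2}{(1-\gamma)^2m}+\frac{4\beta}{1-\gamma}\sqrt{\frac{\|V^\star_\gamma\|_{\mathrm{sp}}+1+\frac1m}{m}}+\frac4m$$ and $$\|\overline V^\star_\gamma-V^\star_\gamma\|_\infty\le\frac{2\beta^2}{(1-\gamma)^2m}+\frac{4\beta}{1-\gamma}\sqrt{\frac{\|\overline V^\star_\gamma\|_{\mathrm{sp}}+1+\frac1m}{m}}+\frac4m.$$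
   Context: $V^{\pi'}_\gamma$, $V^\star_\gamma$ are the discounted value of policy $\pi'$ and optimal value in the DMDP $(P,r,\gamma)$, with $\pi^\star_\gamma$ an optimal policy of it; $\overline V^{\pi'}_\gamma,\overline V^\star_\gamma$ are the analogous quantities in $(\overline P,r,\gamma)$. $V^\pi_\gamma(s)=\mathbb{E}^\pi_s[\sum_{t\ge0}\gamma^tr(S_t,A_t)]$. $\|x\|_{\mathrm{sp}}=\max_sx(s)-\min_sx(s)$. *)

From HB Require Import structures.
From mathcomp Require Import all_boot all_order all_algebra.
From mathcomp Require Import all_classical all_reals all_analysis.
Set Implicit Arguments. Unset Strict Implicit. Unset Printing Implicit Defensive.
Import Order.TTheory GRing.Theory Num.Theory.
Local Open Scope ring_scope.
Local Open Scope classical_set_scope.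

Section MDP.
Variables (R : realType) (S A : finType).

(* transition kernel P s a s' : probability of moving to s' from s under a *)
Definition is_kernel (P : S -> A -> S -> R) : Prop :=
  forall s a, (forall s', 0 <= P s a s') /\ \sum_(s' : S) P s a s' = 1.

Definition reward01 (r : S -> A -> R) : Prop :=
  forall s a, 0 <= r s a <= 1.

(* stationary (possibly randomized) Markov policy: pi s a = prob. of a in s *)
Definition is_policy (pi : S -> A -> R) : Prop :=
  forall s, (forall a, 0 <= pi s a) /\ \sum_(a : A) pi s a = 1.

Definition Ppi (P : S -> A -> S -> R) (pi : S -> A -> R) (f : S -> R) : S -> R :=
  fun s => \sum_(a : A) pi s a * \sum_(s' : S) P s a s' * f s'.

Definition rpi (r : S -> A -> R) (pi : S -> A -> R) : S -> R :=
  fun s => \sum_(a : A) pi s a * r s a.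

(* discounted value V^pi_gamma(s) = E^pi_s [ sum_t gamma^t r(S_t, A_t) ]
   = sum_t gamma^t (P_pi^t r_pi)(s) *)
Definition Vpi (P : S -> A -> S -> R) (r : S -> A -> R) (gamma : R)
  (pi : S -> A -> R) : S -> R :=
  fun s => limn (fun n => \sum_(t < n) gamma ^+ t * iter t (Ppi P pi) (rpi r pi) s).

Definition Vstar (P : S -> A -> S -> R) (r : S -> A -> R) (gamma : R) : S -> R :=
  fun s => sup [set Vpi P r gamma pi s | pi in is_policy].

Definition is_optimal (P : S -> A -> S -> R) (r : S -> A -> R) (gamma : R)
  (pi : S -> A -> R) : Prop :=
  is_policy pi /\ forall s, Vpi P r gamma pi s = Vstar P r gamma s.

Definition supnorm (x : S -> R) : R := \big[Num.max/0]_(s : S) `|x s|.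

Definition spnorm (x : S -> R) : R := sup (range x) - inf (range x).

End MDP.

From HB Require Import structures.
From mathcomp Require Import all_boot all_order all_algebra.
From mathcomp Require Import all_classical all_reals all_analysis.
From mathcomp Require Import lra.
Import Order.TTheory GRing.Theory Num.Theory.
Set Implicit Arguments. Unset Strict Implicit.
Local Open Scope ring_scope.
Local Open Scope classical_set_scope.

(* Let D be the sup-norm distance between the optimal values Vstar and Vstar' of
   the two MDPs, and write V, V' for values in P, Pbar.  Optimality of pistar for
   P and near-optimality of pi for Pbar sandwich the difference:
   Vstar - Vstar' <= V pistar - V' pistar and Vstar' - Vstar <= V' pi - V pi + 1/m,
   so D is at most the two deviation terms of the hypotheses plus 1/m.  Each of
   them involves the span of a value function lying within D + 1/m of Vstar (resp.
   of Vstar') in sup norm, and subadditivity of the square root splits it into the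
   deviation term of the conclusion plus a sqrt (2 D / m), a = beta / (1 - gamma).
   The self-bounding inequality D <= c + a sqrt (2 D / m) is then solved by AM-GM:
   D <= 2 c + 2 a^2 / m. *)

Section RealFacts.
Variable R : realType.

Lemma convex_comb_in01 (I : finType) (w x : I -> R) :
  (forall i, 0 <= w i) -> \sum_i w i = 1 -> (forall i, 0 <= x i <= 1) ->
  0 <= \sum_i w i * x i <= 1.
Proof.
move=> w_ge0 w_sum1 x01; apply/andP; split.
  by apply: sumr_ge0 => i _; apply: mulr_ge0 => //; case/andP: (x01 i).
rewrite -w_sum1; apply: ler_sum => i _.
by apply: ler_piMr => //; case/andP: (x01 i).
Qed.

Lemma discounted_sum_le (g : R) (x : nat -> R) : 0 < g < 1 ->
  (forall t, 0 <= x t <= 1) ->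
  limn (fun n => \sum_(t < n) g ^+ t * x t) <= (1 - g)^-1.
Proof.
move=> /andP[g_gt0 g_lt1] x01.
set u := fun n => _.
have u_le n : u n <= (1 - g)^-1.
  rewrite -div1r; apply: le_trans (geometric_le_lim n ler01 g_gt0 _); last first.
    by rewrite gtr0_norm.
  rewrite /u /series /= big_mkord; apply: ler_sum => t _ /=.
  by rewrite mul1r; apply: ler_piMr; [exact/exprn_ge0/ltW | by case/andP: (x01 t)].
have u_nd : nondecreasing_seq u.
  apply/nondecreasing_seqP => k; rewrite /u big_ord_recr /= lerDl.
  by apply: mulr_ge0; [exact/exprn_ge0/ltW | case/andP: (x01 k)].
apply: limr_le; last exact: nearW.
by apply: nondecreasing_is_cvgn => //; exists (1 - g)^-1 => _ [n _ <-].
Qed.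

Lemma sqrtrD_le (u v : R) : 0 <= v -> Num.sqrt (u + v) <= Num.sqrt u + Num.sqrt v.
Proof.
move=> v_ge0; have [u_ge0|u_lt0] := lerP 0 u; last first.
  have uv_le : u + v <= v by lra.
  by apply: le_trans (ler_wsqrtr uv_le) _; rewrite lerDr sqrtr_ge0.
have su := sqrtr_ge0 u; have sv := sqrtr_ge0 v.
rewrite -(ger0_norm (addr_ge0 su sv)) -sqrtr_sqr ler_sqrt ?sqr_ge0 //.
by rewrite sqrrD !sqr_sqrtr // -addrA lerD2l lerDr mulrn_wge0 ?mulr_ge0.
Qed.

Lemma le_self_bounding (a m c D : R) : 0 < m -> 0 <= D ->
  D <= c + a * Num.sqrt (2 * D / m) -> D <= 2 * c + 2 * a ^+ 2 / m.
Proof.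
move=> m_gt0 D_ge0 D_le; set y := Num.sqrt _ in D_le.
have m_neq0 : m != 0 by rewrite gt_eqF.
have y2 : y ^+ 2 * m = 2 * D.
  rewrite sqr_sqrtr ?divfK //.
  by apply: divr_ge0; [apply: mulr_ge0 | exact: ltW].
have amgm : a * y <= a ^+ 2 / m + D / 2.
  rewrite -(ler_pM2r m_gt0) mulrDl divfK //.
  have := sqr_ge0 (a - m * y / 2); rewrite !expr2 in y2 *.
  nra.
lra.
Qed.

End RealFacts.

Section ValueBounds.
Variables (R : realType) (S A : finType).

Lemma Ppi_in01 (P : S -> A -> S -> R) (pi : S -> A -> R) (f : S -> R) :
  is_kernel P -> is_policy pi -> (forall s, 0 <= f s <= 1) ->
  forall s, 0 <= Ppi P pi f s <= 1.
Proof.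
move=> HP Hpi f01 s; rewrite /Ppi.
apply: convex_comb_in01 => [a||a]; [exact: (Hpi s).1 | exact: (Hpi s).2 |].
by apply: convex_comb_in01; [exact: (HP s a).1 | exact: (HP s a).2 |].
Qed.

Lemma rpi_in01 (r : S -> A -> R) (pi : S -> A -> R) :
  reward01 r -> is_policy pi -> forall s, 0 <= rpi r pi s <= 1.
Proof.
move=> Hr Hpi s; rewrite /rpi.
by apply: convex_comb_in01 => [a||a]; [exact: (Hpi s).1 | exact: (Hpi s).2 |].
Qed.

Lemma iter_Ppi_rpi_in01 (P : S -> A -> S -> R) (r : S -> A -> R)
    (pi : S -> A -> R) t :
  is_kernel P -> reward01 r -> is_policy pi ->
  forall s, 0 <= iter t (Ppi P pi) (rpi r pi) s <= 1.
Proof.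
move=> HP Hr Hpi; elim: t => [|t IHt] /=; first exact: rpi_in01.
exact: Ppi_in01.
Qed.

Lemma Vpi_le_horizon (P : S -> A -> S -> R) (r : S -> A -> R) (gamma : R)
    (pi : S -> A -> R) :
  is_kernel P -> reward01 r -> is_policy pi -> 0 < gamma < 1 ->
  forall s, Vpi P r gamma pi s <= (1 - gamma)^-1.
Proof.
move=> HP Hr Hpi Hgamma s.
apply: (@discounted_sum_le R gamma (fun t => iter t (Ppi P pi) (rpi r pi) s)) => // t.
exact: iter_Ppi_rpi_in01.
Qed.

Lemma Vpi_le_Vstar (P : S -> A -> S -> R) (r : S -> A -> R) (gamma : R)
    (pi : S -> A -> R) :
  is_kernel P -> reward01 r -> is_policy pi -> 0 < gamma < 1 ->
  forall s, Vpi P r gamma pi s <= Vstar P r gamma s.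
Proof.
move=> HP Hr Hpi Hgamma s; apply: ub_le_sup; last by exists pi.
by exists (1 - gamma)^-1 => _ [p Hp <-]; apply: Vpi_le_horizon.
Qed.

End ValueBounds.

Section Norms.
Variables (R : realType) (S : finType).
Implicit Types (f g : S -> R).

Lemma normr_le_supnorm f s : `|f s| <= supnorm f.
Proof. exact: (le_bigmax 0 (fun s => `|f s|)). Qed.

Lemma supnorm_le f c : 0 <= c -> (forall s, `|f s| <= c) -> supnorm f <= c.
Proof. by move=> c_ge0 f_le; apply: bigmax_le. Qed.

Lemma supnorm_ge0 f : 0 <= supnorm f.
Proof.
by rewrite /supnorm; elim/big_ind: _ => // x y x_ge0 _; rewrite le_max x_ge0.
Qed.

Lemma has_ubound_range f : has_ubound (range f).
Proof.
exists (supnorm f) => _ [s _ <-].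
exact: le_trans (ler_norm _) (normr_le_supnorm f s).
Qed.

Lemma has_lbound_range f : has_lbound (range f).
Proof.
exists (- supnorm f) => _ [s _ <-].
by have := normr_le_supnorm f s; rewrite ler_norml => /andP[].
Qed.

Lemma spnorm_le_band f g c1 c2 : 0 <= c1 -> 0 <= c2 ->
  (forall s, g s - c1 <= f s <= g s + c2) -> spnorm f <= spnorm g + c1 + c2.
Proof.
move=> c1_ge0 c2_ge0 f_band; rewrite /spnorm.
have [s0 _|S_empty] := pickP (fun _ : S => true); last first.
  have -> : range f = range g by apply/seteqP; split=> y [s]; have := S_empty s.
  lra.
have sup_le : sup (range f) <= sup (range g) + c2.
  apply: ge_sup; first by exists (f s0), s0.
  move=> _ [s _ <-]; apply: le_trans (andP (f_band s)).2 _; rewrite lerD2r.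
  by apply: ub_le_sup; [exact: has_ubound_range | exists s].
have inf_ge : inf (range g) - c1 <= inf (range f).
  apply: lb_le_inf; first by exists (f s0), s0.
  move=> _ [s _ <-]; apply: le_trans _ (andP (f_band s)).1; rewrite lerD2r.
  by apply: ge_inf; [exact: has_lbound_range | exists s].
lra.
Qed.

End Norms.

Section Perturbation.
Variables (R : realType) (S A : finType).
Variables (P Pbar : S -> A -> S -> R) (r : S -> A -> R) (gamma m a : R).
Variables (pistar pi : S -> A -> R).
Hypotheses (HP : is_kernel P) (HPbar : is_kernel Pbar) (Hr : reward01 r).
Hypotheses (Hgamma : 0 < gamma < 1) (m_gt0 : 0 < m) (a_ge0 : 0 <= a).
Hypotheses (pistar_opt : is_optimal P r gamma pistar) (pi_policy : is_policy pi).

Local Notation V := (Vpi P r gamma).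
Local Notation Vbar := (Vpi Pbar r gamma).
Local Notation Vs := (Vstar P r gamma).
Local Notation Vbs := (Vstar Pbar r gamma).
Local Notation dev x := (a * Num.sqrt (x / m)).

Hypothesis pistar_close :
  supnorm (fun s => V pistar s - Vbar pistar s) <= dev (spnorm (V pistar) + 1).
Hypothesis pi_near_opt : forall s, Vbar pi s >= Vbs s - 1 / m.
Hypothesis pi_close :
  supnorm (fun s => Vbar pi s - V pi s) <= dev (spnorm (Vbar pi) + 1).

Let gap := supnorm (fun s => Vbs s - Vs s).

Lemma dev_ge0 x : 0 <= dev x.
Proof. by rewrite mulr_ge0 ?sqrtr_ge0. Qed.

Lemma dev_le x y : x <= y -> dev x <= dev y.
Proof.
move=> le_xy; apply: ler_wpM2l => //; apply: ler_wsqrtr.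
by rewrite ler_pM2r ?invr_gt0.
Qed.

Lemma devD_le x y : 0 <= y -> dev (x + y) <= dev x + dev y.
Proof.
move=> y_ge0; rewrite -mulrDr mulrDl; apply: ler_wpM2l => //.
by apply/sqrtrD_le/divr_ge0 => //; exact: ltW.
Qed.

Lemma Vpi_pistar : V pistar = Vs.
Proof. by apply: funext => s; apply: pistar_opt.2. Qed.

Lemma Vstarbar_band s : Vs s - gap <= Vbs s <= Vs s + gap.
Proof.
have : `|Vbs s - Vs s| <= gap := normr_le_supnorm (fun s => Vbs s - Vs s) s.
by rewrite ler_norml => /andP[lo hi]; apply/andP; split; lra.
Qed.

Lemma Vbar_pi_band s : Vbs s - 1 / m <= Vbar pi s <= Vbs s.
Proof. by rewrite pi_near_opt (Vpi_le_Vstar HPbar Hr pi_policy Hgamma). Qed.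

Lemma gap_le_dev : gap <= dev (spnorm Vs + 1) + dev (spnorm (Vbar pi) + 1) + 1 / m.
Proof.
have e1_ge0 := dev_ge0 (spnorm Vs + 1).
have e2_ge0 := dev_ge0 (spnorm (Vbar pi) + 1).
have inv_m_ge0 : 0 <= 1 / m by rewrite divr_ge0 ?ltW.
apply: supnorm_le => [|s]; first lra.
have e1 := le_trans (ler_norm _) (le_trans (normr_le_supnorm _ s) pistar_close).
have e2 := le_trans (ler_norm _) (le_trans (normr_le_supnorm _ s) pi_close).
rewrite Vpi_pistar in e1.
have Vbar_pistar_le := Vpi_le_Vstar HPbar Hr pistar_opt.1 Hgamma s.
have V_pi_le := Vpi_le_Vstar HP Hr pi_policy Hgamma s.
have /andP[Vbar_pi_ge _] := Vbar_pi_band s.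
by rewrite ler_norml; apply/andP; split; lra.
Qed.

Lemma gap_le_spnorm_Vstar :
  gap <= 2 * dev (spnorm Vs + 1 + 1 / m) + 1 / m + dev (2 * gap).
Proof.
have gap_ge0 : 0 <= gap := supnorm_ge0 _.
have inv_m_ge0 : 0 <= 1 / m by rewrite divr_ge0 ?ltW.
have sp_Vbar_pi : spnorm (Vbar pi) <= spnorm Vs + (gap + 1 / m) + gap.
  apply: spnorm_le_band => [||s]; rewrite ?addr_ge0 //.
  have /andP[lo hi] := Vbar_pi_band s; have /andP[lo' hi'] := Vstarbar_band s.
  by apply/andP; split; lra.
have e1_le : dev (spnorm Vs + 1) <= dev (spnorm Vs + 1 + 1 / m).
  by apply: dev_le; rewrite lerDl.
have e2_le :
    dev (spnorm (Vbar pi) + 1) <= dev (spnorm Vs + 1 + 1 / m) + dev (2 * gap).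
  by apply: le_trans (devD_le _ _); [apply: dev_le; lra | rewrite mulr_ge0].
have := gap_le_dev; lra.
Qed.

Lemma gap_le_spnorm_Vstarbar :
  gap <= 2 * dev (spnorm Vbs + 1 + 1 / m) + 1 / m + dev (2 * gap).
Proof.
have gap_ge0 : 0 <= gap := supnorm_ge0 _.
have inv_m_ge0 : 0 <= 1 / m by rewrite divr_ge0 ?ltW.
have sp_Vbar_pi : spnorm (Vbar pi) <= spnorm Vbs + 1 / m + 0.
  apply: spnorm_le_band => // s.
  by have /andP[lo hi] := Vbar_pi_band s; apply/andP; split; lra.
have sp_Vs : spnorm Vs <= spnorm Vbs + gap + gap.
  apply: spnorm_le_band => // s.
  by have /andP[lo hi] := Vstarbar_band s; apply/andP; split; lra.
have e1_le :
    dev (spnorm Vs + 1) <= dev (spnorm Vbs + 1 + 1 / m) + dev (2 * gap).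
  by apply: le_trans (devD_le _ _); [apply: dev_le; lra | rewrite mulr_ge0].
have e2_le : dev (spnorm (Vbar pi) + 1) <= dev (spnorm Vbs + 1 + 1 / m).
  by apply: dev_le; lra.
have := gap_le_dev; lra.
Qed.

End Perturbation.
Local Close Scope classical_set_scope.

Theorem lemma7 (R : realType) (S A : finType)
  (P Pbar : S -> A -> S -> R) (r : S -> A -> R)
  (m beta gamma : R) (pistar pi : S -> A -> R) :
  is_kernel P -> is_kernel Pbar -> reward01 r ->
  1 < m -> 1 < beta -> 0 < gamma < 1 ->
  is_optimal P r gamma pistar ->
  is_policy pi ->
  supnorm (fun s => Vpi P r gamma pistar s - Vpi Pbar r gamma pistar s)
    <= beta / (1 - gamma) *
       Num.sqrt ((spnorm (Vpi P r gamma pistar) + 1) / m) ->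
  (forall s, Vpi Pbar r gamma pi s >= Vstar Pbar r gamma s - 1 / m) ->
  supnorm (fun s => Vpi Pbar r gamma pi s - Vpi P r gamma pi s)
    <= beta / (1 - gamma) *
       Num.sqrt ((spnorm (Vpi Pbar r gamma pi) + 1) / m) ->
  supnorm (fun s => Vstar Pbar r gamma s - Vstar P r gamma s)
    <= 2 * beta ^+ 2 / ((1 - gamma) ^+ 2 * m)
       + 4 * beta / (1 - gamma) *
         Num.sqrt ((spnorm (Vstar P r gamma) + 1 + 1 / m) / m)
       + 4 / m
  /\
  supnorm (fun s => Vstar Pbar r gamma s - Vstar P r gamma s)
    <= 2 * beta ^+ 2 / ((1 - gamma) ^+ 2 * m)
       + 4 * beta / (1 - gamma) *
         Num.sqrt ((spnorm (Vstar Pbar r gamma) + 1 + 1 / m) / m)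
       + 4 / m.
Proof.
move=> HP HPbar Hr m_gt1 beta_gt1 Hgamma pistar_opt pi_policy.
move=> pistar_close pi_near_opt pi_close.
have m_gt0 : 0 < m := lt_trans ltr01 m_gt1.
have inv_m_ge0 : 0 <= 1 / m by rewrite divr_ge0 ?ltW.
set a := beta / (1 - gamma) in pistar_close pi_close.
have a_ge0 : 0 <= a.
  case/andP: Hgamma => _ gamma_lt1.
  by rewrite divr_ge0 ?subr_ge0 ?ltW // (lt_trans ltr01).
have -> : 2 * beta ^+ 2 / ((1 - gamma) ^+ 2 * m) = 2 * a ^+ 2 / m.
  by rewrite /a expr_div_n invfM !mulrA.
have -> : 4 * beta / (1 - gamma) = 4 * a by rewrite /a mulrA.
have gap_ge0 := supnorm_ge0 (fun s => Vstar Pbar r gamma s - Vstar P r gamma s).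
have gap_Vstar := gap_le_spnorm_Vstar HP HPbar Hr Hgamma m_gt0 a_ge0 pistar_opt
  pi_policy pistar_close pi_near_opt pi_close.
have gap_Vstarbar := gap_le_spnorm_Vstarbar HP HPbar Hr Hgamma m_gt0 a_ge0
  pistar_opt pi_policy pistar_close pi_near_opt pi_close.
split.
- apply: le_trans (le_self_bounding m_gt0 gap_ge0 gap_Vstar) _.
  by move: inv_m_ge0; clear; lra.
- apply: le_trans (le_self_bounding m_gt0 gap_ge0 gap_Vstarbar) _.
  by move: inv_m_ge0; clear; lra.
Qed.
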